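(* For every $k\in[K]$, the function $f_k:\mathbb{R}^K_{\ge0}\setminus\{\mathbf{0}\}\to\mathbb{R}$ is a $0$-homogeneous rational function of ${\bm{r}}$.
   Context: Setting: distributions $\mathcal{D}_1,\dots,\mathcal{D}_K$ on $\mathcal{Z}$, a loss $\ell(h,{\bm{z}})$ (all expectations finite), $N\ge1$, and a learning algorithm $\mathcal{A}:\mathcal{Z}^N\to\mathcal{H}$. For ${\bm{r}}\in\Delta_K=\{{\bm{r}}\ge0:\sum_kr_k=1\}$, $\bar e_k({\bm{r}})=\mathbb{E}_{S\sim(\sum_jr_j\mathcal{D}_j)^N}\mathbb{E}_{{\bm{z}}\sim\mathcal{D}_k}[\ell(\mathcal{A}(S),{\bm{z}})]$, and $f_k({\bm{r}})=\bar e_k({\bm{r}}/|{\bm{r}}|)$ for ${\bm{r}}\in\mathbb{R}^K_{\ge0}\setminus\{\mathbf{0}\}$, $|{\bm{r}}|=\sum_jr_j$. *)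

From HB Require Import structures.
From mathcomp Require Import all_boot all_order all_algebra.
From mathcomp Require Import all_classical all_reals all_analysis.
From mathcomp Require mpoly.

Set Implicit Arguments.
Unset Strict Implicit.
Unset Printing Implicit Defensive.

Import Order.TTheory GRing.Theory Num.Theory.
Local Open Scope classical_set_scope.
Local Open Scope ring_scope.

Section Defs.
Context {R : realType} {d : measure_display} {Z : measurableType d}.

Lemma max0_ge0 (x : R) : 0 <= Num.max 0 x.
Proof. by rewrite le_max lexx. Qed.

Definition nnpart (x : R) : {nonneg R} :=
  @NngNum R (Num.max 0 x) (max0_ge0 x).

(* The mixture measure  \sum_j w_j D_j  (weights are clipped at 0; on the
   simplex this is exactly the mixture). *)
Definition mixture (K : nat) (D : 'I_K -> {measure set Z -> \bar R})
  (w : 'I_K -> R) : {measure set Z -> \bar R} :=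
  msum (fun j : nat => match @insub nat (fun j => j < K)%N _ j with
                       | Some i => mscale (nnpart (w i)) (D i)
                       | None => mzero
                       end) K.

(* Expectation of g : Z^N -> \bar R under the N-fold product P^N,
   written as the iterated integral over the N coordinates. *)
Fixpoint prodE (P : {measure set Z -> \bar R}) (n : nat) :
  (n.-tuple Z -> \bar R) -> \bar R :=
  match n return (n.-tuple Z -> \bar R) -> \bar R with
  | 0%N => fun g => g [tuple]
  | n'.+1 => fun g => (\int[P]_z prodE P (fun t => g (cons_tuple z t)))%E
  end.

Definition ebar (K N : nat) (H : Type) (D : 'I_K -> {measure set Z -> \bar R})
  (ell : H -> Z -> R) (A : N.-tuple Z -> H) (k : 'I_K) (w : 'I_K -> R) : R :=
  fine (prodE (mixture D w) (fun S => \int[D k]_z (ell (A S) z)%:E)%E).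

Definition rsum (K : nat) (r : 'I_K -> R) : R := \sum_(j < K) r j.

Definition fk (K N : nat) (H : Type) (D : 'I_K -> {measure set Z -> \bar R})
  (ell : H -> Z -> R) (A : N.-tuple Z -> H) (k : 'I_K) (r : 'I_K -> R) : R :=
  ebar D ell A k (fun j => r j / rsum r).

End Defs.

Definition simplex {R : realType} (K : nat) : set ('I_K -> R) :=
  [set w | (forall j, 0 <= w j) /\ \sum_(j < K) w j = 1].

Definition nonneg_nonzero {R : realType} (K : nat) : set ('I_K -> R) :=
  [set r | (forall j, 0 <= r j) /\ exists j, r j != 0].

Definition homogeneous0 {R : realType} (K : nat) (Dom : set ('I_K -> R))
  (f : ('I_K -> R) -> R) : Prop :=
  forall r c, Dom r -> 0 < c -> f (fun j => c * r j) = f r.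

Definition rational_on {R : realType} (K : nat) (Dom : set ('I_K -> R))
  (f : ('I_K -> R) -> R) : Prop :=
  exists P Q : mpoly.mpoly K R,
    (forall r, Dom r -> mpoly.meval r Q != 0) /\
    (forall r, Dom r -> f r = mpoly.meval r P / mpoly.meval r Q).

From HB Require Import structures.
From mathcomp Require Import all_boot all_order all_algebra.
From mathcomp Require Import all_classical all_reals all_analysis measurable_realfun.
From mathcomp Require mpoly.
From mathcomp Require Import ring.
Import -(notations) mpoly.
Import Order.TTheory GRing.Theory Num.Theory.
Local Open Scope classical_set_scope.
Local Open Scope ring_scope.

(* Expanding the N-fold product of the mixture [sum_j w_j D_j] multilinearly,
   [ebar_k w] is the sum over words [j_1 ... j_N] in [K]^N of
   [w_{j_1} ... w_{j_N} c_j], where [c_j] is the same expectation under the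
   product [D_{j_1} x ... x D_{j_N}]; it is finite because [(1/K)^N] times that
   product is dominated by the N-fold power of the uniform mixture.  Evaluated at
   [w = r / |r|] this is a homogeneous polynomial of degree [N] in [r] divided
   by [|r|^N]. *)

Section iter_integral.
Context {R : realType} {d : measure_display} {Z : measurableType d}.
Local Open Scope ereal_scope.

Lemma fin_num_pmule (c : R) (y : \bar R) :
  (0 < c)%R -> c%:E * y \is a fin_num -> y \is a fin_num.
Proof.
move=> c0; case: y => [//||].
- by rewrite mulry gtr0_sg // mul1e.
- by rewrite mulrNy gtr0_sg // mul1e.
Qed.

Lemma integral_ae_sub (mu : {measure set Z -> \bar R}) (f P Q : Z -> \bar R) :
  measurable_fun setT f -> measurable_fun setT P -> measurable_fun setT Q ->
  (forall z, 0 <= P z) -> (forall z, 0 <= Q z) ->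
  \int[mu]_z (P z + Q z) < +oo ->
  (forall z, P z + Q z \is a fin_num -> f z = P z - Q z) ->
  \int[mu]_z f z = \int[mu]_z P z - \int[mu]_z Q z.
Proof.
move=> mf mP mQ P0 Q0 PQ_fin fE.
have PQ_split := PQ_fin; rewrite ge0_integralD // in PQ_split.
have intP : mu.-integrable setT P.
  apply/integrableP; split => //; under eq_integral => z _ do rewrite gee0_abs//.
  by apply: le_lt_trans PQ_split; rewrite leeDl// integral_ge0.
have intQ : mu.-integrable setT Q.
  apply/integrableP; split => //; under eq_integral => z _ do rewrite gee0_abs//.
  by apply: le_lt_trans PQ_split; rewrite leeDr// integral_ge0.
have PQ_ae := integrable_ae measurableT (integrableD measurableT intP intQ).
rewrite (ae_eq_integral (P \- Q)) ?integralB//; first exact: emeasurable_funB.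
by apply: filterS PQ_ae => z /(_ I) PQz _; exact: fE.
Qed.

Fixpoint iter_integral (n : nat) (m : nat -> {measure set Z -> \bar R}) :
  (n.-tuple Z -> \bar R) -> \bar R :=
  match n return (n.-tuple Z -> \bar R) -> \bar R with
  | 0%N => fun g => g [tuple]
  | n'.+1 => fun g =>
      \int[m 0%N]_z iter_integral n' (fun i => m i.+1) (fun t => g (cons_tuple z t))
  end.

Lemma prodE_iter_integral (mu : {measure set Z -> \bar R}) n g :
  prodE mu g = iter_integral n (fun=> mu) g.
Proof. by elim: n g => [//|n IH] g /=; apply: eq_integral => z _; rewrite IH. Qed.

(* Mixtures are only typed as measures, so instead of sigma-finiteness we
   track this closure property, which mixtures inherit from their components. *)
Definition param_integral_measurable (mu : {measure set Z -> \bar R}) :=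
  forall d1 (T1 : measurableType d1) (F : T1 * Z -> \bar R),
    measurable_fun setT F -> (forall p, 0 <= F p) ->
    measurable_fun setT (fun x => \int[mu]_y F (x, y)).

Lemma sigma_finite_param_integral_measurable
    (mu : {sigma_finite_measure set Z -> \bar R}) :
  param_integral_measurable mu.
Proof. by move=> d1 T1 F mF F0; exact: measurable_fun_fubini_tonelli_F. Qed.

Lemma mzero_param_integral_measurable : param_integral_measurable mzero.
Proof.
move=> d1 T1 F _ _; under eq_fun => x do rewrite integral_measure_zero.
exact: measurable_cst.
Qed.

Lemma measurable_param_integral {mu : {measure set Z -> \bar R}} :
  param_integral_measurable mu ->
  forall d1 (T1 : measurableType d1) (F : T1 * Z -> \bar R),
    measurable_fun setT F -> measurable_fun setT (fun x => \int[mu]_y F (x, y)).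
Proof.
move=> mu_param d1 T1 F mF.
have -> : (fun x => \int[mu]_y F (x, y)) =
    (fun x => \int[mu]_y F^\+ (x, y) - \int[mu]_y F^\- (x, y)).
  apply/funext => x; rewrite integralE.
  by congr (_ - _); apply: eq_integral => y _; rewrite !(funeposE, funenegE).
apply: emeasurable_funB.
- exact: (mu_param _ _ F^\+ (measurable_funepos mF) (funepos_ge0 F)).
- exact: (mu_param _ _ F^\- (measurable_funeneg mF) (funeneg_ge0 F)).
Qed.

Lemma measurable_iter_integral n (m : nat -> {measure set Z -> \bar R})
    d1 (T1 : measurableType d1) (G : T1 * n.-tuple Z -> \bar R) :
  (forall i, param_integral_measurable (m i)) -> measurable_fun setT G ->
  measurable_fun setT (fun x => iter_integral n m (fun t => G (x, t))).
Proof.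
elim: n m d1 T1 G => [|n IH] m d1 T1 G m_param mG /=; first exact: measurable_fun_pair1.
apply: (measurable_param_integral (m_param 0%N) _ _ (fun p : T1 * Z =>
  iter_integral n (fun i => m i.+1) (fun t => G (p.1, cons_tuple p.2 t)))).
apply: (IH _ _ _ (fun q => G (q.1.1, cons_tuple q.1.2 q.2)) (fun i => m_param i.+1)).
apply: (measurableT_comp mG); apply/measurable_fun_pairP; split.
  exact: (measurableT_comp measurable_fst measurable_fst).
exact: (measurable_cons (measurableT_comp measurable_snd measurable_fst) measurable_snd).
Qed.

Lemma measurable_iter_integral_cons n (m : nat -> {measure set Z -> \bar R})
    (g : n.+1.-tuple Z -> \bar R) :
  (forall i, param_integral_measurable (m i)) -> measurable_fun setT g ->
  measurable_fun setT (fun z => iter_integral n m (fun t => g (cons_tuple z t))).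
Proof.
move=> m_param mg.
apply: (@measurable_iter_integral n m _ _ (fun p => g (cons_tuple p.1 p.2)) m_param).
by apply: (measurableT_comp mg); exact: measurable_cons.
Qed.

Lemma measurable_cons_section {n} {g : n.+1.-tuple Z -> \bar R} (z : Z) :
  measurable_fun setT g -> measurable_fun setT (fun t => g (cons_tuple z t)).
Proof. by move=> mg; apply: (measurableT_comp mg); exact: measurable_cons. Qed.

Lemma iter_integral_ge0 n (m : nat -> {measure set Z -> \bar R}) g :
  (forall t, 0 <= g t) -> 0 <= iter_integral n m g.
Proof.
elim: n m g => [|n IH] m g g0 /=; first exact: g0.
by apply: integral_ge0 => z _; exact: IH.
Qed.

Lemma le_iter_integral n (m : nat -> {measure set Z -> \bar R})
    (g1 g2 : n.-tuple Z -> \bar R) :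
  (forall i, param_integral_measurable (m i)) ->
  measurable_fun setT g1 -> measurable_fun setT g2 ->
  (forall t, 0 <= g1 t) -> (forall t, g1 t <= g2 t) ->
  iter_integral n m g1 <= iter_integral n m g2.
Proof.
elim: n m g1 g2 => [|n IH] m g1 g2 m_param mg1 mg2 g10 g12 /=; first exact: g12.
apply: ge0_le_integral => //.
- by move=> z _; exact: iter_integral_ge0.
- exact: measurable_iter_integral_cons.
- exact: measurable_iter_integral_cons.
move=> z _; apply: IH => //; last exact: measurable_cons_section.
exact: measurable_cons_section.
Qed.

Lemma iter_integralD n (m : nat -> {measure set Z -> \bar R})
    (g1 g2 : n.-tuple Z -> \bar R) :
  (forall i, param_integral_measurable (m i)) ->
  measurable_fun setT g1 -> measurable_fun setT g2 ->
  (forall t, 0 <= g1 t) -> (forall t, 0 <= g2 t) ->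
  iter_integral n m (g1 \+ g2) = iter_integral n m g1 + iter_integral n m g2.
Proof.
elim: n m g1 g2 => [|n IH] m g1 g2 m_param mg1 mg2 g10 g20 //=.
rewrite -ge0_integralD //; last 4 first.
- by move=> z _; exact: iter_integral_ge0.
- exact: measurable_iter_integral_cons.
- by move=> z _; exact: iter_integral_ge0.
- exact: measurable_iter_integral_cons.
apply: eq_integral => z _; apply: IH => //; last exact: measurable_cons_section.
exact: measurable_cons_section.
Qed.

Lemma iter_integral_abse n (m : nat -> {measure set Z -> \bar R})
    (g : n.-tuple Z -> \bar R) :
  (forall i, param_integral_measurable (m i)) -> measurable_fun setT g ->
  iter_integral n m (abse \o g) = iter_integral n m g^\+ + iter_integral n m g^\-.
Proof.
move=> m_param mg; rewrite fune_abse iter_integralD //.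
- exact: measurable_funepos.
- exact: measurable_funeneg.
Qed.

Lemma iter_integral_funeposneg n (m : nat -> {measure set Z -> \bar R})
    (g : n.-tuple Z -> \bar R) :
  (forall i, param_integral_measurable (m i)) -> measurable_fun setT g ->
  iter_integral n m (abse \o g) < +oo ->
  iter_integral n m g = iter_integral n m g^\+ - iter_integral n m g^\-.
Proof.
elim: n m g => [|n IH] m g m_param mg /=; first by move=> _; rewrite {1}(funeposneg g).
have m'_param i : param_integral_measurable (m i.+1) := m_param i.+1.
set P := fun z => iter_integral n _ (fun t => g^\+ (cons_tuple z t)).
set Q := fun z => iter_integral n _ (fun t => g^\- (cons_tuple z t)).
have abs_split z :
    iter_integral n (fun i => m i.+1) (fun t => `|g (cons_tuple z t)|) = P z + Q z.
  apply: etrans (iter_integral_abse _ _ (g \o cons_tuple z) m'_param _) _.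
    exact: measurable_cons_section.
  by rewrite funepos_comp funeneg_comp.
move=> abs_fin; apply: integral_ae_sub.
- exact: measurable_iter_integral_cons.
- by apply: measurable_iter_integral_cons => //; exact: measurable_funepos.
- by apply: measurable_iter_integral_cons => //; exact: measurable_funeneg.
- by move=> z; apply: iter_integral_ge0 => t; exact: funepos_ge0.
- by move=> z; apply: iter_integral_ge0 => t; exact: funeneg_ge0.
- by under eq_integral => z _ do rewrite -abs_split.
move=> z PQ_fin; apply: etrans (IH _ (g \o cons_tuple z) m'_param _ _) _.
- exact: measurable_cons_section.
- by rewrite (abs_split z) -ge0_fin_numE // adde_ge0 // iter_integral_ge0.
by rewrite funepos_comp funeneg_comp.
Qed.

End iter_integral.

Fixpoint words (K n : nat) : seq (seq 'I_K) :=
  if n is n'.+1 then [seq j :: js | j <- index_enum 'I_K, js <- words K n']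
  else [:: [::]].

Lemma size_words {K n} {js : seq 'I_K} : js \in words K n -> size js = n.
Proof.
elim: n js => [|n IH] js /=; first by rewrite inE => /eqP ->.
by case/allpairsP => -[j js'] /= [_ js'_in ->] /=; rewrite (IH _ js'_in).
Qed.

Section mixture.
Context {R : realType} {d : measure_display} {Z : measurableType d}.
Context (K : nat) (D : 'I_K -> {measure set Z -> \bar R}).
Hypothesis D_param : forall j, param_integral_measurable (D j).
Local Open Scope ereal_scope.

Lemma ge0_integral_mixture w (f : Z -> \bar R) :
  measurable_fun setT f -> (forall z, 0 <= f z) ->
  \int[mixture D w]_z f z = \sum_(j < K) (Num.max 0 (w j))%:E * \int[D j]_z f z.
Proof.
move=> mf f0; rewrite ge0_integral_measure_sum //.
by apply: eq_bigr => j _; rewrite valK ge0_integral_mscale.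
Qed.

Lemma mixture_param_integral_measurable w : param_integral_measurable (mixture D w).
Proof.
move=> d1 T1 F mF F0.
have -> : (fun x => \int[mixture D w]_y F (x, y)) =
    (fun x => \sum_(j < K) (Num.max 0 (w j))%:E * \int[D j]_y F (x, y)).
  by apply/funext => x; rewrite ge0_integral_mixture //; exact: measurable_fun_pair2.
by apply: emeasurable_sum => j; apply: measurable_funeM; exact: D_param.
Qed.

(* Positions beyond the end of the word get the zero measure; they are never
   reached since [words K n] only contains words of length [n]. *)
Definition word_measure (js : seq 'I_K) (i : nat) : {measure set Z -> \bar R} :=
  nth (mzero : {measure set Z -> \bar R}) (map D js) i.

Lemma word_measure_param_integral_measurable js i :
  param_integral_measurable (word_measure js i).
Proof.
elim: js i => [|j js IH] [|i] /=; try exact: mzero_param_integral_measurable.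
- exact: D_param.
- exact: IH.
Qed.

Definition word_integral {n} (js : seq 'I_K) (g : n.-tuple Z -> \bar R) :=
  iter_integral n (word_measure js) g.

Lemma ge0_iter_integral_mixture n w (g : n.-tuple Z -> \bar R) :
  (forall j, (0 <= w j)%R) -> measurable_fun setT g -> (forall t, 0 <= g t) ->
  iter_integral n (fun=> mixture D w) g =
  \sum_(js <- words K n) (\prod_(j <- js) w j)%:E * word_integral js g.
Proof.
elim: n g => [|n IH] g w0 mg g0; first by rewrite /= big_seq1 big_nil mul1e.
have mix_param (i : nat) := mixture_param_integral_measurable w.
rewrite /= ge0_integral_mixture; last 2 first.
- exact: measurable_iter_integral_cons.
- by move=> z; exact: iter_integral_ge0.
rewrite big_allpairs_dep /=; apply: eq_bigr => j _.
rewrite (_ : Num.max 0%R (w j) = w j); last exact/max_idPr.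
under eq_integral => z _ do rewrite (IH _ w0 (measurable_cons_section z mg)) //.
have word_ge0 js z : 0 <= (\prod_(i <- js) w i)%:E *
    word_integral js (fun t => g (cons_tuple z t)).
  by rewrite mule_ge0 ?iter_integral_ge0 // lee_fin prodr_ge0.
rewrite ge0_integral_sum //; last first.
  move=> js; apply: measurable_funeM; apply: measurable_iter_integral_cons => //.
  exact: word_measure_param_integral_measurable.
rewrite ge0_sume_distrr; last by move=> js _; apply: integral_ge0.
apply: eq_bigr => js _; rewrite ge0_integralZl //.
- by rewrite big_cons EFinM muleA.
- apply: measurable_iter_integral_cons => //.
  exact: word_measure_param_integral_measurable.
- by move=> z _; exact: iter_integral_ge0.
- by rewrite lee_fin prodr_ge0.
Qed.

Section signed_integrand.
Variables (n : nat) (g G : n.-tuple Z -> \bar R).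
Hypotheses (K_gt0 : (0 < K)%N) (mg : measurable_fun setT g)
  (mG : measurable_fun setT G) (le_abs_G : forall t, `|g t| <= G t)
  (G_fin : forall w, simplex w -> iter_integral n (fun=> mixture D w) G < +oo).

Lemma fin_num_word_integral (h : n.-tuple Z -> \bar R) js :
  measurable_fun setT h -> (forall t, 0 <= h t) -> (forall t, h t <= G t) ->
  js \in words K n -> word_integral js h \is a fin_num.
Proof.
move=> mh h0 le_hG js_in.
pose u : 'I_K -> R := fun=> (K%:R^-1)%R.
have u_gt0 j : (0 < u j)%R by rewrite invr_gt0 ltr0n.
have u_simplex : simplex u.
  split=> [j|]; first exact: ltW.
  by rewrite sumr_const card_ord -[(_ *+ K)%R]mulr_natr mulVf // pnatr_eq0 -lt0n.
have : iter_integral n (fun=> mixture D u) h < +oo.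
  apply: (le_lt_trans _ (G_fin _ u_simplex)).
  by apply: le_iter_integral => // i; exact: mixture_param_integral_measurable.
rewrite ge0_iter_integral_mixture // => [sum_fin|j]; last exact: ltW.
have /sum_fin_numP/(_ js js_in isT) : \sum_(js <- words K n)
    (\prod_(j <- js) u j)%:E * word_integral js h \is a fin_num.
  rewrite ge0_fin_numE // sume_ge0 // => js' _.
  by rewrite mule_ge0 ?iter_integral_ge0 // lee_fin prodr_ge0 // => j _; exact: ltW.
by apply: fin_num_pmule; exact: prodr_gt0.
Qed.

Definition word_coef js :=
  (fine (word_integral js (g^\+)%E) - fine (word_integral js (g^\-)%E))%R.

Lemma iter_integral_mixture_simplex w : simplex w ->
  iter_integral n (fun=> mixture D w) g =
  (\sum_(js <- words K n) \prod_(j <- js) w j * word_coef js)%:E.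
Proof.
move=> w_simplex; have [w0 _] := w_simplex.
have mix_param (i : nat) := mixture_param_integral_measurable w.
have [pos_le_abs neg_le_abs] :
    (forall t, g^\+ t <= `|g t|) /\ (forall t, g^\- t <= `|g t|).
  by split=> t; rewrite -[`|g t|]/((abse \o g) t) fune_abse ?leeDl ?leeDr.
have expand_fine h : measurable_fun setT h -> (forall t, 0 <= h t) ->
    (forall t, h t <= G t) ->
    iter_integral n (fun=> mixture D w) h =
    (\sum_(js <- words K n) \prod_(j <- js) w j * fine (word_integral js h))%:E.
  move=> mh h0 le_hG; rewrite ge0_iter_integral_mixture // -sumEFin.
  rewrite big_seq [RHS]big_seq; apply: eq_bigr => js js_in.
  by rewrite EFinM fineK // fin_num_word_integral.
rewrite iter_integral_funeposneg //; last first.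
  apply: (le_lt_trans _ (G_fin _ w_simplex)); apply: le_iter_integral => //.
  - exact: measurableT_comp.
  - by move=> t; exact: abse_ge0.
rewrite !expand_fine -?EFinB -?sumrB.
- by congr EFin; apply: eq_bigr => js _; rewrite mulrBr.
- exact: measurable_funeneg.
- exact: funeneg_ge0.
- by move=> t; exact: le_trans (neg_le_abs t) (le_abs_G t).
- exact: measurable_funepos.
- exact: funepos_ge0.
- by move=> t; exact: le_trans (pos_le_abs t) (le_abs_G t).
Qed.

End signed_integrand.

End mixture.

Lemma rsum_gt0 {R : realType} {K} {r : 'I_K -> R} : nonneg_nonzero r -> 0 < rsum r.
Proof.
move=> [r_ge0 [j rj_neq0]]; rewrite /rsum (bigD1 j) //=.
by rewrite ltr_wpDr ?sumr_ge0 // lt0r rj_neq0 r_ge0.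
Qed.

Lemma simplex_normalize {R : realType} {K} {r : 'I_K -> R} :
  nonneg_nonzero r -> simplex (fun j => r j / rsum r).
Proof.
move=> r_nz; have s_gt0 := rsum_gt0 r_nz.
split=> [j|]; first exact: divr_ge0 (r_nz.1 j) (ltW s_gt0).
by rewrite -mulr_suml mulfV // gt_eqF.
Qed.

Lemma homogeneous0_normalize {R : realType} K (F : ('I_K -> R) -> R) :
  homogeneous0 (@nonneg_nonzero R K) (fun r => F (fun j => r j / rsum r)).
Proof.
move=> r c _ c_gt0; congr F; apply/funext => j.
by rewrite /rsum -mulr_sumr invfM mulrACA mulfV ?mul1r // gt_eqF.
Qed.

Lemma rational_on_words {R : realType} K n (c : seq 'I_K -> R) f :
  (forall r, nonneg_nonzero r ->
     f r = \sum_(js <- words K n) \prod_(j <- js) (r j / rsum r) * c js) ->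
  rational_on (@nonneg_nonzero R K) f.
Proof.
move=> fE; pose X i : mpoly K R := mpolyX R (mnm1 i).
exists (\sum_(js <- words K n) c js *: \prod_(i <- js) X i), ((\sum_(j < K) X j) ^+ n).
have evalQ r : meval r ((\sum_(j < K) X j) ^+ n) = rsum r ^+ n.
  by rewrite rmorphXn rmorph_sum; congr (_ ^+ _); apply: eq_bigr => j _; exact: mevalXU.
split=> r r_nz; first by rewrite evalQ expf_neq0 // gt_eqF // rsum_gt0.
rewrite fE // evalQ (big_morph _ (mevalD r) (meval0 r)) mulr_suml.
rewrite big_seq [RHS]big_seq; apply: eq_bigr => js js_in.
rewrite mevalZ (big_morph _ (mevalM r) (meval1 r)) (eq_bigr _ (fun i _ => mevalXU r i)).
rewrite big_split /= big_const_seq count_predT iter_mulr_1 (size_words js_in).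
by rewrite exprVn mulrC mulrA.
Qed.

Theorem lemmaB1 (R : realType) (d : measure_display) (Z : measurableType d)
  (K N : nat) (H : Type) (D : 'I_K -> probability Z R)
  (ell : H -> Z -> R) (A : N.-tuple Z -> H)
  (ell_meas : measurable_fun setT (fun p : N.-tuple Z * Z => ell (A p.1) p.2))
  (finite_exp : forall (k : 'I_K) (w : 'I_K -> R), simplex w ->
     (prodE (mixture (fun j => D j) w)
        (fun S => \int[D k]_z (`|ell (A S) z|)%:E) < +oo)%E) :
  forall k : 'I_K,
    homogeneous0 (@nonneg_nonzero R K) (fk (fun j => D j) ell A k) /\
    rational_on (@nonneg_nonzero R K) (fk (fun j => D j) ell A k).
Proof.
move=> k; split; first exact: homogeneous0_normalize.
have [K0|K_gt0] := posnP K.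
  by exists 0, 0; split=> r [_ [j _]]; move: (ltn_ord j); rewrite {2}K0.
have D_param j : param_integral_measurable (D j) :=
  sigma_finite_param_integral_measurable (D j).
pose g S := (\int[D k]_z (ell (A S) z)%:E)%E.
pose G S := (\int[D k]_z (`|ell (A S) z|)%:E)%E.
have mg : measurable_fun setT g.
  apply: (measurable_param_integral (D_param k) _ _ (fun p => (ell (A p.1) p.2)%:E)).
  exact/measurable_EFinP.
have mG : measurable_fun setT G.
  apply: (measurable_param_integral (D_param k) _ _ (fun p => (`|ell (A p.1) p.2|)%:E)).
  by apply/measurable_EFinP; apply: measurableT_comp ell_meas; exact: normr_measurable.
have le_abs_G S : (`|g S| <= G S)%E.
  apply: le_abse_integral => //; apply/measurable_EFinP.
  exact: (measurable_fun_pair2 (f := fun p => ell (A p.1) p.2)).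
have G_fin w : simplex w -> (iter_integral N (fun=> mixture (fun j => D j) w) G < +oo)%E.
  by move=> w_simplex; rewrite -prodE_iter_integral; exact: finite_exp.
apply: (@rational_on_words _ _ N (word_coef K (fun j => D j) N g)) => r r_nz.
rewrite /fk /ebar prodE_iter_integral.
by rewrite (iter_integral_mixture_simplex _ _ D_param _ g G K_gt0 mg mG le_abs_G G_fin _
  (simplex_normalize r_nz)).
Qed.
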